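(* For all integers $n\ge 2$ and $0\le i\le n$, $$|\mathrm{Bal}^*(n,i)|=\binom{2n-2}{n-i-1}-\binom{2n-2}{n-i-2}+\binom{n-2}{n-i}.$$ Moreover, for the same $n,i$, $$\Big|\bigsqcup_{\substack{b\ge\max(i,1),\ k\ge0\\ 2b-i+k=n}}\mathrm{SYT}^{+k}\big((b,b-i)\big)\Big|=\binom{2n-2}{n-i-1}-\binom{2n-2}{n-i-2}+\binom{n-2}{n-i},$$ where $(b,0)$ denotes the one-row shape $(b)$.
   Context: Binomial coefficients $\binom{a}{c}$ with $a\ge0$ are $0$ if $c<0$ or $c>a$. A ballotlike path of length $n$ ending at height $i$ is a lattice path from $(0,0)$ to $(n,i)$ with steps $U=(1,1)$, $D=(1,-1)$ and horizontal steps $(1,0)$ colored umber ($u$) or denim ($d$), never going below the $x$-axis, such that no umber step occurs at height $0$ and no denim step occurs before the first $D$ step. $\mathrm{Bal}^*(n,i)$ is the set of these paths. $\mathrm{SYT}^{+k}(\lambda)$: for a partition $\lambda$ of $N$ and $k\ge0$, the set of fillings of the cells of $\lambda$ by nonempty sets of positive integers forming a set partition of $[N+k]$, with $\max S(u)<\min S(v)$ whenever $u\ne v$ and $u$ is weakly northwest of $v$. *)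

From HB Require Import structures.
From mathcomp Require Import all_boot all_order all_algebra.
Set Implicit Arguments. Unset Strict Implicit. Unset Printing Implicit Defensive.
Import Order.TTheory GRing.Theory Num.Theory.

(* U = (1,1), D = (1,-1), Hu = umber horizontal step, Hd = denim horizontal step *)
Inductive step := U | D | Hu | Hd.

Definition step_code (s : step) : 'I_4 :=
  match s with U => inord 0 | D => inord 1 | Hu => inord 2 | Hd => inord 3 end.
Definition step_decode (o : 'I_4) : step :=
  match val o with 0 => U | 1 => D | 2 => Hu | _ => Hd end.
Lemma step_codeK : cancel step_code step_decode.
Proof. by case; rewrite /step_decode /= inordK. Qed.

HB.instance Definition _ := Finite.copy step (can_type step_codeK).

(* Returns
   [Some final_height] if the path never goes below the x-axis, no umber
   step occurs at height 0, and no denim step occurs before the first D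
   step; returns [None] otherwise. *)
Fixpoint walk (h : nat) (seenD : bool) (s : seq step) : option nat :=
  match s with
  | [::] => Some h
  | U :: s' => walk h.+1 seenD s'
  | D :: s' => if h is h'.+1 then walk h' true s' else None
  | Hu :: s' => if h == 0 then None else walk h seenD s'
  | Hd :: s' => if seenD then walk h seenD s' else None
  end.

Definition Bal (n i : nat) : {set n.-tuple step} :=
  [set p : n.-tuple step | walk 0 false p == Some i].

(* A partition lambda is given as the seq of its row lengths.  Cells are
   pairs (r, c) (row r, column c, 0-based); the cell (r,c) belongs to lambda
   iff r < size lambda and c < lambda_r.  A filling is a finite function on
   the bounding box 'I_(size lambda) * 'I_(lambda_0), with value set0 outside
   the shape (to make it canonical).  The ground set [N+k] = {1,...,N+k} is
   represented (order-preservingly) by 'I_(N+k) = {0,...,N+k-1}. *)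
Definition cell (lam : seq nat) := ('I_(size lam) * 'I_(head 0 lam))%type.

Definition in_shape (lam : seq nat) (u : cell lam) : bool :=
  (val u.2 < nth 0 lam (val u.1))%N.

Definition weakly_nw (lam : seq nat) (u v : cell lam) : bool :=
  (val u.1 <= val v.1)%N && (val u.2 <= val v.2)%N.

Definition SYTplus (lam : seq nat) (k : nat)
  : {set {ffun cell lam -> {set 'I_(sumn lam + k)}}} :=
  [set f : {ffun cell lam -> {set 'I_(sumn lam + k)}} |
     [forall u, ~~ in_shape u ==> (f u == set0)] &&
     [forall u, in_shape u ==> (f u != set0)] &&
     [forall u, forall v, (in_shape u && in_shape v && (u != v)) ==>
          [disjoint f u & f v]] &&
     [forall x, [exists u, in_shape u && (x \in f u)]] &&
     [forall u, forall v, (in_shape u && in_shape v && (u != v) && weakly_nw u v)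
          ==> [forall x, forall y, ((x \in f u) && (y \in f v)) ==> (x < y)%N]]].

Definition two_row (b i : nat) : seq nat :=
  if (b - i == 0)%N then [:: b] else [:: b; b - i].

Definition binZ (a : nat) (c : int) : int :=
  if (c < 0)%R then 0%R else Posz (binomial a `|c|%N).

From mathcomp Require Import all_boot all_order all_algebra.
From mathcomp Require Import zify ring.
Import Order.TTheory GRing.Theory Num.Theory.
Set Implicit Arguments. Unset Strict Implicit. Unset Printing Implicit Defensive.

(* A ballotlike path is tracked by its height and by whether a D step has
   occurred.  Before the first D only U and umber steps are possible, so these
   paths are counted by [C(n-1, h-1)]; the paths that have seen a D obey a
   four-term recurrence, which the claimed binomial expression is checked to
   satisfy using Pascal's rule.

   For a filling of the shape (b, b-i), read the entries 1, ..., N+k in order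
   and record the cell containing each one.  The conditions defining
   SYT^{+k}((b, b-i)) say exactly that this word of cells fills the diagram from
   the north-west, every cell being entered at its first occurrence.  Writing a
   first occurrence in the top (bottom) row as U (D) and a repetition as an
   umber (denim) step turns these words bijectively into the ballotlike paths
   with b up steps that end at height i; summing over b gives |Bal^*(n,i)|. *)

(** * Counting ballotlike paths by their final state *)

Section CountingWords.
Variable T : finType.

Definition nwords n (P : seq T -> bool) := #|[set t : n.-tuple T | P t]|.

Lemma eq_nwords n (P Q : seq T -> bool) : P =1 Q -> nwords n P = nwords n Q.
Proof. by move=> ePQ; apply: eq_card => t; rewrite !inE ePQ. Qed.

Lemma nwordsE n (P : seq T -> bool) : nwords n P = \sum_(t : n.-tuple T) P t.
Proof. by rewrite /nwords -sum1_card big_mkcond; apply: eq_bigr => t _; rewrite inE. Qed.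

Lemma nwords0 (P : seq T -> bool) : nwords 0 P = P [::].
Proof. by rewrite nwordsE (big_pred1 [tuple]) // => t; rewrite [t]tuple0 !inE eqxx. Qed.

Lemma nwordsS n (P : seq T -> bool) :
  nwords n.+1 P = \sum_(x : T) nwords n (fun w => P (rcons w x)).
Proof.
pose split_last (t : n.+1.-tuple T) : n.-tuple T * T :=
  ([tuple of belast (thead t) (behead t)], last (thead t) (behead t)).
have rconsK (t : n.+1.-tuple T) : rcons (split_last t).1 (split_last t).2 = t.
  by rewrite /= -lastI [in RHS](tuple_eta t).
rewrite nwordsE (reindex (fun p : n.-tuple T * T => [tuple of rcons p.1 p.2])) /=; last first.
  exists split_last => [[t x] _ | t _]; last by apply: val_inj; rewrite /= rconsK.
  have /rcons_inj[et ex] := rconsK [tuple of rcons t x].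
  by apply: injective_projections => /=; [apply: val_inj|].
rewrite -(pair_bigA _ (fun t x => (P (rcons (tval t) x) : nat))) exchange_big.
by apply: eq_bigr => x _; rewrite nwordsE.
Qed.

Lemma nwordsU n (P Q : seq T -> bool) : (forall w, ~~ (P w && Q w)) ->
  nwords n (fun w => P w || Q w) = nwords n P + nwords n Q.
Proof.
move=> PQ0; rewrite !nwordsE -big_split; apply: eq_bigr => t _.
by move: (PQ0 t); case: (P t); case: (Q t).
Qed.

Lemma nwords_pred0 n : nwords n (fun _ => false) = 0.
Proof. by rewrite nwordsE big1. Qed.

End CountingWords.

Lemma step_eqE (s t : step) : (s == t) =
  match s, t with U, U | D, D | Hu, Hu | Hd, Hd => true | _, _ => false end.
Proof. by apply/eqP/idP => [-> | ]; [case: t | case: s; case: t]. Qed.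

Lemma big_step (F : step -> nat) : \sum_(s : step) F s = F U + F D + F Hu + F Hd.
Proof.
rewrite (reindex step_decode) /=; last first.
  exists step_code => [o _ | s _]; last by rewrite step_codeK.
  by apply: val_inj; case: o => [[|[|[|[|k]]]] lt4] //=; rewrite inordK.
by rewrite !big_ord_recl big_ord0 /= addn0 !addnA.
Qed.

Definition next_state (s : step) (st : nat * bool) : option (nat * bool) :=
  let: (h, seenD) := st in
  match s with
  | U => Some (h.+1, seenD)
  | D => if h is h'.+1 then Some (h', true) else None
  | Hu => if h == 0 then None else Some (h, seenD)
  | Hd => if seenD then Some (h, seenD) else None
  end.

Fixpoint run (st : nat * bool) (w : seq step) : option (nat * bool) :=
  if w is s :: w' then obind (run^~ w') (next_state s st) else Some st.

Lemma walk_run h seenD w : walk h seenD w = omap fst (run (h, seenD) w).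
Proof.
elim: w h seenD => [|[] w IHw] [|h] [] //=; rewrite ?IHw //.
Qed.

Lemma run_rcons st w s : run st (rcons w s) = obind (next_state s) (run st w).
Proof. by elim: w st => [|s' w IHw] st /=; case: next_state. Qed.

Definition npaths n h seenD :=
  nwords n (fun w => run (0, false) w == Some (h, seenD)).

Lemma Some_pair_eq (a c : nat) (b d : bool) :
  (Some (a, b) == Some (c, d)) = (a == c) && (b == d).
Proof. by []. Qed.

Lemma npaths0 h seenD : npaths 0 h seenD = (h == 0) && ~~ seenD.
Proof. by rewrite /npaths nwords0 /= Some_pair_eq; case: seenD; rewrite ?andbF // eq_sym. Qed.

Lemma obind_next_eq s o h d : (obind (next_state s) o == Some (h, d)) =
  match s with
  | U => if h is h'.+1 then o == Some (h', d) else false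
  | D => d && ((o == Some (h.+1, false)) || (o == Some (h.+1, true)))
  | Hu => (h != 0) && (o == Some (h, d))
  | Hd => d && (o == Some (h, d))
  end.
Proof.
case: s; case: o => [[[|h0] []]|] //=; case: h => [|h]; case: d;
  rewrite //= ?Some_pair_eq ?andbF //=; lia.
Qed.

Lemma npathsS n h d : npaths n.+1 h d =
  (if h is h'.+1 then npaths n h' d else 0) +
  (if d then npaths n h.+1 false + npaths n h.+1 true else 0) +
  (if h is 0 then 0 else npaths n h d) + (if d then npaths n h d else 0).
Proof.
have lastE s : nwords n (fun w => run (0, false) (rcons w s) == Some (h, d)) =
    nwords n (fun w => obind (next_state s) (run (0, false) w) == Some (h, d)).
  by apply: eq_nwords => w; rewrite run_rcons.
rewrite /npaths nwordsS big_step !lastE {lastE}.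
rewrite !(eq_nwords _ (fun w => obind_next_eq _ (run (0, false) w) h d)).
case: h => [|h]; case: d; rewrite /= ?nwords_pred0 // nwordsU // => w;
by case: (run (0, false) w) => [[h0 []]|] //; rewrite !Some_pair_eq /= ?andbF.
Qed.

Lemma card_Bal n i : #|Bal n i| = npaths n i false + npaths n i true.
Proof.
rewrite -nwordsU => [|w]; last first.
  by case: (run _ w) => [[h []]|] //; rewrite !Some_pair_eq /= ?andbF.
apply: eq_card => t; rewrite !inE walk_run.
by case: (run _ t) => [[h []]|] //=; rewrite !Some_pair_eq /= ?andbT ?andbF ?orbF.
Qed.

(** * The closed formula *)

(* Rewrites [binZ] terms whose arguments agree by [lia] to a common
   representative, so that [lia] then treats them as one atom. *)
Ltac identify_binZ :=
  repeat match goal with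
  | |- context[binZ ?a ?c1] =>
    match goal with
    | |- context[binZ ?b ?c2] =>
      assert_fails (constr_eq (binZ a c1) (binZ b c2));
      let e := fresh "e" in
      assert (e : binZ b c2 = binZ a c1) by (congr binZ; lia);
      rewrite e; clear e
    end
  end.

Section ClosedForms.
Local Open Scope ring_scope.

Lemma binZ_outside a (c : int) : (c < 0) \/ (a%:Z < c) -> binZ a c = 0.
Proof.
rewrite /binZ; case: ltrP => //= c_ge0 [|a_lt_c]; first lia.
by rewrite bin_small //; lia.
Qed.

Lemma binZ_nat a k : binZ a k%:Z = 'C(a, k)%:Z.
Proof. by []. Qed.

Lemma binZS a (c : int) : binZ a.+1 c = binZ a c + binZ a (c - 1).
Proof.
case: c => [[|k]|k].
- by rewrite !binZ_nat !bin0 (@binZ_outside a (0 - 1)) ?addr0 //; left.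
- by rewrite (_ : k.+1%:Z - 1 = k) ?binZ_nat ?binS ?PoszD //; lia.
- by rewrite !binZ_outside //; left; lia.
Qed.

Lemma binZSS a (c : int) :
  binZ a.+2 c = binZ a c + 2 * binZ a (c - 1) + binZ a (c - 2).
Proof. by rewrite !binZS (_ : c - 1 - 1 = c - 2); [ring | lia]. Qed.

Lemma binZ_sub a (c : int) : binZ a c = binZ a (a%:Z - c).
Proof.
have [c_lt0 | c_ge0] := ltrP c 0; first by rewrite !binZ_outside //; [right; lia | left].
have [a_lt_c | c_le_a] := ltrP a%:Z c; first by rewrite !binZ_outside //; [left; lia | right].
have [k ck] : exists k : nat, c = k%:Z by exists `|c|%N; lia.
subst c.
by rewrite (_ : a%:Z - k%:Z = (a - k)%N) ?binZ_nat ?bin_sub //; lia.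
Qed.

Ltac drop_binZ_outside :=
  repeat match goal with
  | |- context[binZ ?a ?c] => rewrite (@binZ_outside a c); [|lia]
  end.

Lemma npaths_noD m h : (npaths m.+1 h false)%:Z = binZ m (h%:Z - 1).
Proof.
elim: m h => [|m IHm] [|h]; rewrite npathsS /= ?npaths0 ?addn0;
  try by rewrite binZ_outside //; left.
- by case: h => [|h]; rewrite ?subrr // binZ_outside //; right; lia.
- by rewrite PoszD !IHm binZS; identify_binZ; lia.
Qed.

Lemma npaths_seenD m h : (0 < m)%N ->
  (npaths m.+1 h true)%:Z =
    binZ (2 * m) (m%:Z - h%:Z) - binZ (2 * m) (m%:Z - h%:Z - 1)
    + binZ m.-1 (h%:Z - 2) - binZ m (h%:Z - 1).
Proof.
elim: m h => [|[|m] IHm] h // _.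
  by case: h => [|[|[|h]]]; rewrite npathsS /= ?npathsS ?npaths0.
have -> : (2 * m.+2 = (2 * m.+1).+2)%N by lia.
rewrite npathsS; case: h => [|h] /=; rewrite ?add0n ?addn0 !PoszD !IHm // !npaths_noD;
  rewrite ![binZ (2 * m.+1).+2 _]binZSS ![binZ m.+2 _]binZS ![binZ m.+1 _]binZS /=;
  drop_binZ_outside; identify_binZ; last lia.
by rewrite (binZ_sub _ (m.+2%:Z - 0)); identify_binZ; lia.
Qed.

End ClosedForms.

(** * Ballotlike paths as words of cells *)

Definition step_allowed (s : step) (h : nat) (seenD : bool) : bool :=
  match s with U => true | D | Hu => 0 < h | Hd => seenD end.

Lemma next_state_ok s h d : (next_state s (h, d) != None) = step_allowed s h d.
Proof. by case: s; case: h; case: d. Qed.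

Lemma count_mem_rcons (t : seq step) s s' :
  count_mem s' (rcons t s) = count_mem s' t + (s == s').
Proof. by rewrite -cats1 count_cat /= addn0. Qed.

Lemma run_state t st : run (0, false) t = Some st ->
  count_mem D t <= count_mem U t /\
  st = (count_mem U t - count_mem D t, 0 < count_mem D t).
Proof.
elim/last_ind: t st => [|t s IHt] st; first by case=> <-.
rewrite run_rcons !count_mem_rcons.
case: (run _ t) (IHt) => [st0|] // /(_ st0 erefl) [].
set p := count_mem U t; set q := count_mem D t => le_qp -> /=.
case: s; rewrite !step_eqE /=.
- by case=> <-; split; [lia | congr pair; lia].
- by case E: (_ - _) => [|h] //= [<-]; split; [lia | congr pair; lia].
- by case: eqP => // ? [<-]; rewrite !addn0.
- by case: ifP => // ? [<-]; rewrite !addn0.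
Qed.

(* A cell of a two-row diagram as (row, column), the second row being [true]. *)
Definition tcell := (bool * nat)%type.
Definition tcell0 : tcell := (false, 0).

Definition in_two_row (p q : nat) (u : tcell) : bool := if u.1 then u.2 < q else u.2 < p.

Definition nw (u v : tcell) : bool := (u.1 ==> v.1) && (u.2 <= v.2).

Definition nw_ordered (w : seq tcell) := forall x y, x < size w -> y < size w ->
  nth tcell0 w x != nth tcell0 w y -> nw (nth tcell0 w x) (nth tcell0 w y) -> x < y.

Definition nw_closed (w : seq tcell) := forall u v, u \in w -> nw v u -> v \in w.

Definition tableau_word (p q : nat) (w : seq tcell) :=
  nw_ordered w /\ forall u, (u \in w) = in_two_row p q u.

Lemma nw_ordered_rcons w u : nw_ordered (rcons w u) <->
  nw_ordered w /\ forall v, v \in w -> v != u -> ~~ nw u v.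
Proof.
split=> [ord | [ord new] x y].
  split=> [x y xw yw | v vw vu].
    by have := ord x y; rewrite size_rcons !nth_rcons xw yw; apply; apply: ltnW.
  apply/negP => nw_uv; have iw : index v w < size w by rewrite index_mem.
  have := ord (size w) (index v w); rewrite size_rcons ltnS leqnn ltnS ltnW //.
  rewrite !nth_rcons ltnn eqxx iw nth_index // eq_sym => /(_ isT isT vu nw_uv).
  by rewrite ltnNge ltnW.
rewrite size_rcons !ltnS leq_eqVlt => /orP[/eqP-> | xw]; rewrite leq_eqVlt => /orP[/eqP-> | yw].
- by rewrite eqxx.
- rewrite !nth_rcons ltnn eqxx yw eq_sym => vu.
  by rewrite (negbTE (new _ (mem_nth tcell0 yw) vu)).
- by move=> *; apply: leq_trans xw _.
- by rewrite !nth_rcons xw yw; apply: ord.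
Qed.

Lemma nw_closed_rcons w u : nw_ordered (rcons w u) -> nw_closed (rcons w u) -> nw_closed w.
Proof.
move=> /nw_ordered_rcons[_ new] closed v v' vw nw_v'v.
have := closed v v'; rewrite !mem_rcons !in_cons vw orbT => /(_ isT nw_v'v).
case/orP=> [/eqP v'u | //]; subst v'.
by case: (eqVneq v u) => [<- // | vu]; move: (new v vw vu); rewrite nw_v'v.
Qed.

Definition step_of_cell (fresh : bool) (u : tcell) : step :=
  if u.1 then (if fresh then D else Hd) else (if fresh then U else Hu).

Definition cell_of_step (s : step) (p q : nat) : tcell :=
  match s with U => (false, p) | Hu => (false, p.-1) | D => (true, q) | Hd => (true, q.-1) end.

Definition encode (w : seq tcell) : seq step :=
  [seq step_of_cell (nth tcell0 w x \notin take x w) (nth tcell0 w x) | x <- iota 0 (size w)].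

Definition decode (t : seq step) : seq tcell :=
  [seq cell_of_step (nth U t x) (count_mem U (take x t)) (count_mem D (take x t))
  | x <- iota 0 (size t)].

Lemma size_encode w : size (encode w) = size w.
Proof. by rewrite size_map size_iota. Qed.

Lemma size_decode t : size (decode t) = size t.
Proof. by rewrite size_map size_iota. Qed.

Lemma encode_rcons w u : encode (rcons w u) = rcons (encode w) (step_of_cell (u \notin w) u).
Proof.
rewrite /encode size_rcons -addn1 iotaD map_cat /= cats1 add0n.
congr rcons; last by rewrite nth_rcons ltnn eqxx -cats1 take_size_cat.
apply/eq_in_map => x; rewrite mem_iota add0n => /= xw.
by rewrite nth_rcons xw -cats1 takel_cat // ltnW.
Qed.

Lemma decode_rcons t s :
  decode (rcons t s) = rcons (decode t) (cell_of_step s (count_mem U t) (count_mem D t)).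
Proof.
rewrite /decode size_rcons -addn1 iotaD map_cat /= cats1 add0n.
congr rcons; last by rewrite nth_rcons ltnn eqxx -cats1 take_size_cat.
apply/eq_in_map => x; rewrite mem_iota add0n => /= xt.
by rewrite nth_rcons xt -cats1 takel_cat // ltnW.
Qed.

Lemma tableau_word_rcons p q w s : tableau_word p q w -> q <= p ->
  step_allowed s (p - q) (0 < q) ->
  tableau_word (p + (s == U)) (q + (s == D)) (rcons w (cell_of_step s p q)) /\
  step_of_cell (cell_of_step s p q \notin w) (cell_of_step s p q) = s.
Proof.
move=> [ord memw] le_qp ok.
split; first split.
- apply/nw_ordered_rcons; split=> // -[r j]; rewrite memw.
  by case: s ok; case: r; rewrite /nw /in_two_row /= ?xpair_eqE; lia.
- move=> [r j]; rewrite mem_rcons in_cons memw /in_two_row.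
  by case: s ok; case: r; rewrite /= ?xpair_eqE !step_eqE /=; lia.
- rewrite memw /in_two_row; case: s ok => /= ok; rewrite ?ltnn //.
  + by rewrite (_ : p.-1 < p) //; lia.
  + by rewrite (_ : q.-1 < q) //; lia.
Qed.

Lemma tableau_word_rcons_cell p q w u : tableau_word p q w -> q <= p ->
  nw_ordered (rcons w u) -> (forall v, nw v u -> v \in rcons w u) ->
  exists2 s, step_allowed s (p - q) (0 < q) & u = cell_of_step s p q.
Proof.
move=> [_ memw] le_qp /nw_ordered_rcons[_ new] closed.
have before v : in_two_row p q v -> v != u -> ~~ nw u v by rewrite -memw; apply: new.
have after v : nw v u -> (v == u) || in_two_row p q v.
  by rewrite -memw -in_cons -mem_rcons; apply: closed.
case: u {new closed} before after => [[] j] before after.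
- have := before (true, q.-1); have := after (true, q); have := after (false, q).
  rewrite /nw /in_two_row /= !xpair_eqE /= => h1 h2 h3.
  by case: (ltnP j q) => jq; [exists Hd | exists D] => //=; try congr pair; lia.
- have := before (false, p.-1); have := before (true, p.-1); have := after (false, p).
  rewrite /nw /in_two_row /= !xpair_eqE /= => h1 h2 h3.
  by case: (ltnP j p) => jp; [exists Hu | exists U] => //=; try congr pair; lia.
Qed.

Lemma tableau_word_nil : tableau_word 0 0 [::].
Proof. by split=> [x y | [[] j]]; rewrite //= ?in_nil ?ltn0. Qed.

Lemma decode_tableau t : run (0, false) t != None ->
  encode (decode t) = t /\ tableau_word (count_mem U t) (count_mem D t) (decode t).
Proof.
elim/last_ind: t => [|t s IHt]; first by split=> //; apply: tableau_word_nil.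
rewrite run_rcons; case E: (run _ t) => [st|] //= ok.
have [le_qp est] := run_state E; rewrite {}est next_state_ok in ok.
move: IHt; rewrite E => /(_ isT)[encK tw].
have [tw' stepE] := tableau_word_rcons tw le_qp ok.
by rewrite decode_rcons encode_rcons stepE encK !count_mem_rcons.
Qed.

Lemma encode_tableau w : nw_ordered w -> nw_closed w ->
  [/\ decode (encode w) = w, run (0, false) (encode w) != None &
      tableau_word (count_mem U (encode w)) (count_mem D (encode w)) w].
Proof.
elim/last_ind: w => [|w u IHw] ord closed; first by split=> //; apply: tableau_word_nil.
have [ord_w _] := iffLR (nw_ordered_rcons _ _) ord.
have [decK run_w tw] := IHw ord_w (nw_closed_rcons ord closed).
case E: (run _ (encode w)) run_w => [st|] // _.
have [le_qp est] := run_state E.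
have u_last : u \in rcons w u by rewrite mem_rcons mem_head.
have [s ok ->] := tableau_word_rcons_cell tw le_qp ord (fun v => closed u v u_last).
have [tw' stepE] := tableau_word_rcons tw le_qp ok.
rewrite encode_rcons stepE decode_rcons decK run_rcons E est /= next_state_ok.
by rewrite !count_mem_rcons.
Qed.

Lemma tableau_word_closed p q w : q <= p -> tableau_word p q w -> nw_closed w.
Proof.
move=> le_qp [_ memw] u v; rewrite !memw.
by case: u v => [[] j] [[] j']; rewrite /nw /in_two_row /=; lia.
Qed.

Lemma in_two_row_inj p q p' q' : in_two_row p q =1 in_two_row p' q' -> p = p' /\ q = q'.
Proof.
move=> e; have := e (false, p); have := e (false, p').
have := e (true, q); have := e (true, q'); by rewrite /in_two_row /= !ltnn; lia.
Qed.

Lemma encode_tableau_word b i w : i <= b -> tableau_word b (b - i) w ->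
  [/\ decode (encode w) = w, count_mem U (encode w) = b & walk 0 false (encode w) = Some i].
Proof.
move=> le_ib tw; have [ord memw] := tw.
have [decK run_w [_ memw']] := encode_tableau ord (tableau_word_closed (leq_subr i b) tw).
have [p_eq q_eq] := in_two_row_inj (fun u => etrans (esym (memw u)) (memw' u)).
case E: run run_w => [st|] // _; have [_ est] := run_state E.
split=> //; rewrite walk_run E est /= -p_eq -q_eq; congr Some; lia.
Qed.

Lemma decode_tableau_word b i t : walk 0 false t = Some i -> count_mem U t = b ->
  encode (decode t) = t /\ tableau_word b (b - i) (decode t).
Proof.
rewrite walk_run; case E: run => [[h d]|] //= [<-] <-.
have [le_qp [-> _]] := run_state E.
by rewrite subKn //; apply: decode_tableau; rewrite E.
Qed.

(** * Fillings of two-row shapes *)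

Lemma SYTplusP lam k (f : {ffun cell lam -> {set 'I_(sumn lam + k)}}) :
  f \in SYTplus lam k <->
  [/\ (forall u, ~~ in_shape u -> f u = set0),
      (forall u, in_shape u -> f u != set0),
      (forall u v, in_shape u -> in_shape v -> u != v -> [disjoint f u & f v]),
      (forall x, exists u, in_shape u && (x \in f u)) &
      (forall u v, in_shape u -> in_shape v -> u != v -> weakly_nw u v ->
         forall x y, x \in f u -> y \in f v -> (x < y)%N)].
Proof.
rewrite inE; split.
  move=> /andP[/andP[/andP[/andP[/forallP out /forallP nonempty] /forallP disj]
    /forallP cover] /forallP incr].
  split=> [u | u | u v | x | u v su sv uv nw_uv x y xu yv].
  - by move: (out u) => /implyP H /H /eqP.
  - by move: (nonempty u) => /implyP.
  - by move: (disj u) => /forallP /(_ v) /implyP H su sv uv; apply: H; rewrite su sv.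
  - exact/existsP.
  - move: (incr u) => /forallP /(_ v); rewrite su sv uv nw_uv /=.
    by move=> /forallP /(_ x) /forallP /(_ y); rewrite xu yv.
move=> [out nonempty disj cover incr].
apply/andP; split; [apply/andP; split; [apply/andP; split; [apply/andP; split|]|]|].
- by apply/forallP => u; apply/implyP => /out ->.
- by apply/forallP => u; apply/implyP => /nonempty.
- apply/forallP => u; apply/forallP => v; apply/implyP => /andP[/andP[su sv] uv].
  exact: disj.
- by apply/forallP => x; apply/existsP; apply: cover.
- apply/forallP => u; apply/forallP => v.
  apply/implyP => /andP[/andP[/andP[su sv] uv] nw_uv].
  apply/forallP => x; apply/forallP => y; apply/implyP => /andP[xu yv].
  exact: (incr u v).
Qed.

Lemma two_row_head b i : head 0 (two_row b i) = b.
Proof. by rewrite /two_row; case: (_ == _). Qed.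

Lemma nth_two_row b i : nth 0 (two_row b i) 0 = b /\ nth 0 (two_row b i) 1 = b - i.
Proof. by rewrite /two_row; case: eqP. Qed.

Lemma size_two_row_le b i : size (two_row b i) <= 2.
Proof. by rewrite /two_row; case: (_ == _). Qed.

Lemma size_two_row b i : 0 < b - i -> size (two_row b i) = 2.
Proof. by rewrite /two_row; case: eqP => // ->. Qed.

Lemma sumn_two_row b i : sumn (two_row b i) = b + (b - i).
Proof. by rewrite /two_row; case: eqP => [->|] /=; rewrite ?addn0. Qed.

Definition tcell_of lam (u : cell lam) : tcell := (val u.1 != 0, val u.2).

Section TwoRowFillings.
Variables b i k : nat.

Local Notation lam := (two_row b i).
Local Notation M := (sumn lam + k).
Local Notation filling := {ffun cell lam -> {set 'I_M}}.

Lemma in_shape_two_row (u : cell lam) : in_shape u = in_two_row b (b - i) (tcell_of u).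
Proof.
have [nth0 nth1] := nth_two_row b i; have := size_two_row_le b i.
rewrite /in_shape /tcell_of /in_two_row.
by case: u => [[[|[|r]] ?] [j ?]] /= ?; rewrite ?nth0 ?nth1 //; lia.
Qed.

Lemma tcell_of_inj : injective (@tcell_of lam).
Proof.
have := size_two_row_le b i.
move=> size_lam [[r1 r1_lt] [j1 ?]] [[r2 r2_lt] [j2 ?]] [/= r12 j12]; subst j2.
have r1_r2 : r1 = r2 by case: r1 r2 r1_lt r2_lt r12 => [|[|?]] [|[|?]] //; lia.
by subst r2; congr pair; apply: val_inj.
Qed.

Lemma tcell_of_onto v : in_two_row b (b - i) v -> exists u : cell lam, tcell_of u = v.
Proof.
have hd := two_row_head b i.
case: v => [[] j]; rewrite /in_two_row /= => hj.
  have r_lt : 1 < size lam by rewrite size_two_row; lia.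
  have j_lt : j < head 0 lam by rewrite hd; lia.
  by exists (Ordinal r_lt, Ordinal j_lt).
have r_lt : 0 < size lam by rewrite /two_row; case: (_ == _).
have j_lt : j < head 0 lam by rewrite hd.
by exists (Ordinal r_lt, Ordinal j_lt).
Qed.

Lemma weakly_nw_two_row (u v : cell lam) : weakly_nw u v = nw (tcell_of u) (tcell_of v).
Proof.
have := size_two_row_le b i; rewrite /weakly_nw /nw /tcell_of.
by case: u v => [[[|[|?]] ?] [? ?]] [[[|[|?]] ?] [? ?]] /=; lia.
Qed.

(* [tcell0] is a junk value: in an SYT filling every entry lies in some cell. *)
Definition entry_cell (f : filling) (x : 'I_M) : tcell :=
  if [pick u | in_shape u && (x \in f u)] is Some u then tcell_of u else tcell0.

Definition filling_word (f : filling) : seq tcell := [seq entry_cell f x | x <- enum 'I_M].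

Definition word_filling (w : seq tcell) : filling :=
  [ffun u => [set x : 'I_M | in_shape u && (nth tcell0 w x == tcell_of u)]].

Lemma size_filling_word f : size (filling_word f) = M.
Proof. by rewrite size_map size_enum_ord. Qed.

Lemma nth_filling_word f (x : 'I_M) : nth tcell0 (filling_word f) x = entry_cell f x.
Proof. by rewrite /filling_word (nth_map x) ?size_enum_ord // nth_ord_enum. Qed.

Section Tableau.
Variable f : filling.
Hypothesis f_SYT : f \in SYTplus lam k.

Lemma entry_cellE x u : in_shape u -> x \in f u -> entry_cell f x = tcell_of u.
Proof.
have [_ _ disj _ _] := proj1 (SYTplusP f) f_SYT; move=> su xu; rewrite /entry_cell.
case: pickP => [u' /andP[su' xu'] | none]; last by move: (none u); rewrite su xu.
have [-> // | u'u] := eqVneq u' u.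
by move: (disjointFr (disj _ _ su' su u'u) xu'); rewrite xu.
Qed.

Lemma entry_cell_spec x : exists u, [/\ in_shape u, x \in f u & entry_cell f x = tcell_of u].
Proof.
have [_ _ _ cover _] := proj1 (SYTplusP f) f_SYT; have [u /andP[su xu]] := cover x.
by exists u; rewrite (entry_cellE su xu).
Qed.

Lemma filling_word_tableau : tableau_word b (b - i) (filling_word f).
Proof.
have [_ nonempty _ _ incr] := proj1 (SYTplusP f) f_SYT; split.
  move=> x y; rewrite size_filling_word => x_lt y_lt.
  rewrite -[x]/(val (Ordinal x_lt)) -[y]/(val (Ordinal y_lt)) !nth_filling_word.
  have [u [su xu ->]] := entry_cell_spec (Ordinal x_lt).
  have [v [sv yv ->]] := entry_cell_spec (Ordinal y_lt).
  move=> neq nw_uv; have uv : u != v by apply: contraNneq neq => ->.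
  by apply: (incr u v su sv uv _ _ _ xu yv); rewrite weakly_nw_two_row.
move=> v; apply/mapP/idP => [[x _ ->] | v_in].
  by have [u [su _ ->]] := entry_cell_spec x; rewrite -in_shape_two_row.
have [u uv] := tcell_of_onto v_in.
have su : in_shape u by rewrite in_shape_two_row uv.
have /set0Pn[x xu] := nonempty u su.
by exists x; rewrite ?mem_enum // (entry_cellE su xu).
Qed.

Lemma filling_wordK : word_filling (filling_word f) = f.
Proof.
have [out _ _ _ _] := proj1 (SYTplusP f) f_SYT.
apply/ffunP => u; rewrite ffunE; apply/setP => x; rewrite inE nth_filling_word.
have [su | nsu] := boolP (in_shape u); last by rewrite out // inE.
apply/eqP/idP => [ex | xu]; last exact: entry_cellE.
have [v [sv xv ev]] := entry_cell_spec x.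
by move: ex; rewrite ev => /tcell_of_inj <-.
Qed.

End Tableau.

Section Word.
Variable w : seq tcell.
Hypotheses (w_tableau : tableau_word b (b - i) w) (size_w : size w = M).

Lemma word_filling_SYT : word_filling w \in SYTplus lam k.
Proof.
have [ord memw] := w_tableau.
apply/SYTplusP; split=> [u su | u su | u v su sv uv | x | u v su sv uv nw_uv x y].
- by apply/setP => x; rewrite ffunE !inE (negbTE su).
- have uw : tcell_of u \in w by rewrite memw -in_shape_two_row.
  have x_lt : index (tcell_of u) w < M by rewrite -size_w index_mem.
  by apply/set0Pn; exists (Ordinal x_lt); rewrite ffunE inE su /= nth_index.
- rewrite -setI_eq0; apply/eqP/setP => x; rewrite !ffunE !inE su sv /=.
  by apply/andP => -[/eqP-> /eqP /tcell_of_inj uv']; rewrite uv' eqxx in uv.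
- have x_lt : x < size w by rewrite size_w.
  have [u uv] := tcell_of_onto (etrans (esym (memw _)) (mem_nth tcell0 x_lt)).
  by exists u; rewrite ffunE inE in_shape_two_row uv -memw mem_nth ?eqxx.
- rewrite !ffunE !inE su sv /= => /eqP ex /eqP ey.
  apply: ord; rewrite ?size_w // ex ey -?weakly_nw_two_row //.
  by rewrite (inj_eq tcell_of_inj).
Qed.

Lemma word_fillingK : filling_word (word_filling w) = w.
Proof.
apply: (@eq_from_nth _ tcell0); first by rewrite size_filling_word.
move=> x; rewrite size_filling_word => x_lt.
rewrite -[x]/(val (Ordinal x_lt)) nth_filling_word.
have [u [su xu ->]] := entry_cell_spec word_filling_SYT (Ordinal x_lt).
by move: xu; rewrite ffunE inE su => /eqP.
Qed.

End Word.

End TwoRowFillings.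

Lemma card_SYTplus_two_row b i k : i <= b ->
  #|SYTplus (two_row b i) k| =
  #|[set t : (sumn (two_row b i) + k).-tuple step |
       (walk 0 false t == Some i) && (count_mem U t == b)]|.
Proof.
move=> le_ib; set M := sumn _ + k.
have size_code (f : {ffun cell (two_row b i) -> {set 'I_M}}) :
  size (encode (filling_word f)) == M by rewrite size_encode size_filling_word.
rewrite -(@card_in_imset _ _ (fun f => Tuple (size_code f))); last first.
  move=> f g f_SYT g_SYT /(congr1 val) /= efg.
  have [decf _ _] := encode_tableau_word le_ib (filling_word_tableau f_SYT).
  have [decg _ _] := encode_tableau_word le_ib (filling_word_tableau g_SYT).
  by rewrite -(filling_wordK f_SYT) -(filling_wordK g_SYT) -decf -decg efg.
apply: eq_card => t; rewrite inE.
apply/imsetP/andP => [[f f_SYT ->] | [/eqP walk_t /eqP count_t]].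
  by have [_ -> ->] := encode_tableau_word le_ib (filling_word_tableau f_SYT).
have [encK tw] := decode_tableau_word walk_t count_t.
have size_t : size (decode t) = M by rewrite size_decode size_tuple.
exists (word_filling b i k (decode t)); first exact: word_filling_SYT.
by apply: val_inj; rewrite /= word_fillingK.
Qed.

Lemma count_memUD (t : seq step) : count_mem U t + count_mem D t <= size t.
Proof.
rewrite -count_predUI (@eq_count _ (predI _ _) pred0) ?count_pred0 ?addn0 ?count_size //.
by case; rewrite /= !step_eqE.
Qed.

Lemma count_memU_bounds n i (t : n.-tuple step) : 0 < n -> walk 0 false t = Some i ->
  (maxn i 1 <= count_mem U t) && (2 * count_mem U t - i <= n).
Proof.
rewrite walk_run; case E: run => [[h d]|] // n_gt0 [<-].
have [le_qp [-> _]] := run_state E; have := count_memUD t; rewrite size_tuple.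
have U_first : 0 < count_mem U t.
  move: E (size_tuple t) n_gt0; case: (tval t) => [|[] w] //=; first by move=> _ <-.
  by rewrite step_eqE.
by move: U_first le_qp; set p := count_mem U t; set q := count_mem D t; lia.
Qed.

Lemma sum_card_SYTplus n i : 0 < n ->
  \sum_(b < n.+1 | (maxn i 1 <= b) && (2 * b - i <= n))
     #|SYTplus (two_row b i) (n - (2 * b - i))| = #|Bal n i|.
Proof.
move=> n_gt0.
pose balU b (t : seq step) := (walk 0 false t == Some i) && (count_mem U t == b).
have card_SYT_b (b : 'I_n.+1) : (maxn i 1 <= b) && (2 * b - i <= n) ->
    #|SYTplus (two_row b i) (n - (2 * b - i))| = nwords n (balU b).
  move=> /andP[le_b le_n]; rewrite card_SYTplus_two_row; last lia.
  by rewrite sumn_two_row (_ : b + (b - i) + (n - (2 * b - i)) = n) //; lia.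
rewrite (eq_bigr _ card_SYT_b) big_mkcond /=.
rewrite (eq_bigr (fun b : 'I_n.+1 => nwords n (balU b))) => [|b _]; last first.
  case: ifP => // out; rewrite nwordsE big1 // => t _; apply/eqP; rewrite eqb0.
  by apply: contraFN out => /andP[/eqP/(count_memU_bounds n_gt0) + /eqP <-].
under eq_bigr do rewrite nwordsE.
rewrite exchange_big -[#|Bal n i|]/(nwords n (fun t => walk 0 false t == Some i)).
rewrite nwordsE; apply: eq_bigr => t _.
have U_lt : count_mem U t < n.+1 by rewrite ltnS -[X in _ <= X](size_tuple t) count_size.
rewrite (bigD1 (Ordinal U_lt)) //= /balU eqxx andbT big1 ?addn0 // => b neq.
apply/eqP; rewrite eqb0 negb_and orbC; apply/orP; left.
by apply: contraNneq neq => eU; apply/eqP/val_inj.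
Qed.

Unset Implicit Arguments.
Local Open Scope int_scope.

Theorem theorem13 (n i : nat) (hn : (2 <= n)%N) (hi : (i <= n)%N) :
  let rhs : int :=
    (binZ (2 * n - 2) (n%:Z - i%:Z - 1) - binZ (2 * n - 2) (n%:Z - i%:Z - 2)
     + binZ (n - 2) (n%:Z - i%:Z))%R in
  (#|Bal n i|%:Z = rhs)
  /\
  ((\sum_(b < n.+1 | (maxn i 1 <= b)%N && (2 * b - i <= n)%N)
       #|SYTplus (two_row b i) (n - (2 * b - i))|)%N%:Z = rhs).
Proof.
move=> rhs; have card_Bal_rhs : #|Bal n i|%:Z = rhs.
  case: n hn hi @rhs => [|[|m]] // _ _ rhs; rewrite {}/rhs.
  rewrite card_Bal PoszD npaths_noD npaths_seenD // (binZ_sub (m.+2 - 2)).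
  by identify_binZ; lia.
by split=> //; rewrite sum_card_SYTplus // ltnW.
Qed.
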